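(* Let $W\in[0,1]^{k\times k}$ be a symmetric positive semidefinite matrix with unit diagonal, $\mu>0$, and consider linear utilities $u_i({\boldsymbol\theta})=W_i^\top{\boldsymbol\theta}$ with thresholds $\mu_i=\mu$ and strategy space $\mathbb{R}_+^k$. Let ${\boldsymbol\theta}^{\mathrm{eq}}$ be an optimal stable equilibrium, $I=\{i:\theta^{\mathrm{eq}}_i=0\}$, and $\bar W$ the restriction of $W$ (rows and columns) to $[k]\setminus I$. If $\bar{\boldsymbol\theta}$ is an optimal solution of $\min_{\bf x}\{\mathbf{1}^\top{\bf x}:\bar W{\bf x}\ge\mu\mathbf{1},\ {\bf x}\ge\mathbf{0}\}$, then $\bar W\bar{\boldsymbol\theta}=\mu\mathbf{1}$.
   Context: $W_i$ is the $i$-th column of $W$. ${\boldsymbol\theta}$ is feasible if $u_i({\boldsymbol\theta})\ge\mu$ for all $i$. A feasible ${\boldsymbol\theta}\in\mathbb{R}_+^k$ is a stable equilibrium if for no $i$ is there $0\le\theta_i'<\theta_i$ with $u_i(\theta_i',{\boldsymbol\theta}_{-i})\ge\mu$ (${\boldsymbol\theta}$ with $i$-th entry replaced). An optimal stable equilibrium minimizes $\mathbf{1}^\top{\boldsymbol\theta}$ among stable equilibria. *)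

From mathcomp Require Import all_boot all_order all_algebra.
Set Implicit Arguments. Unset Strict Implicit. Unset Printing Implicit Defensive.
Import Order.TTheory GRing.Theory Num.Theory.
Local Open Scope ring_scope.

Section Defs.
Variable R : realFieldType.
Variable k : nat.

Definition util (W : 'M[R]_k) (th : 'cV[R]_k) (i : 'I_k) : R :=
  \sum_(j < k) W j i * th j 0.

Definition replace (th : 'cV[R]_k) (i : 'I_k) (t : R) : 'cV[R]_k :=
  \col_j (if j == i then t else th j 0).

Definition feasible (W : 'M[R]_k) (mu : R) (th : 'cV[R]_k) : Prop :=
  forall i, mu <= util W th i.

Definition stable_eq (W : 'M[R]_k) (mu : R) (th : 'cV[R]_k) : Prop :=
  (forall i, 0 <= th i 0) /\ feasible W mu th /\
  (forall i (t : R), 0 <= t -> t < th i 0 -> ~ (mu <= util W (replace th i t) i)).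

Definition opt_stable_eq (W : 'M[R]_k) (mu : R) (th : 'cV[R]_k) : Prop :=
  stable_eq W mu th /\
  (forall th', stable_eq W mu th' -> \sum_i th i 0 <= \sum_i th' i 0).

Definition restrict (W : 'M[R]_k) (S : {set 'I_k}) : 'M[R]_#|S| :=
  \matrix_(a, b) W (enum_val a) (enum_val b).
End Defs.

Section LP.
Variable R : realFieldType.
Variable n : nat.
Definition lp_feasible (Wb : 'M[R]_n) (mu : R) (x : 'cV[R]_n) : Prop :=
  (forall a, 0 <= x a 0) /\ (forall a, mu <= (Wb *m x) a 0).
Definition lp_optimal (Wb : 'M[R]_n) (mu : R) (x : 'cV[R]_n) : Prop :=
  lp_feasible Wb mu x /\
  (forall y, lp_feasible Wb mu y -> \sum_a x a 0 <= \sum_a y a 0).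
End LP.

(** Stability forces every player in the support S of the equilibrium to be
    tight: a player with slack could lower its own entry.  Hence the restriction
    y of the equilibrium to S is a positive solution of [Wbar y = mu 1].  For an
    optimal x, symmetry of Wbar gives [y^T Wbar x = mu 1^T x <= mu 1^T y], while
    the terms [y_a ((Wbar x)_a - mu)] are nonnegative and sum to
    [mu (1^T x - 1^T y)]; so each vanishes and, y being positive, every
    constraint is tight. *)
From mathcomp Require Import all_boot all_order all_algebra.
From mathcomp Require Import lra.

Set Implicit Arguments.
Unset Strict Implicit.
Unset Printing Implicit Defensive.
Import Order.TTheory GRing.Theory Num.Theory.
Local Open Scope ring_scope.

Lemma lp_optimal_tight (R : realFieldType) n (Wb : 'M[R]_n) (mu : R)
    (x y : 'cV[R]_n) :
  0 <= mu -> Wb^T = Wb -> (forall a, 0 < y a 0) ->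
  Wb *m y = mu *: const_mx 1 ->
  lp_optimal Wb mu x -> Wb *m x = mu *: const_mx 1.
Proof.
move=> mu_ge0 Wb_sym y_pos Wy [[x_ge0 Wx_ge] x_opt].
have mu1_entry a : (mu *: const_mx 1 : 'cV[R]_n) a 0 = mu by rewrite !mxE mulr1.
have Wy_entry a : (Wb *m y) a 0 = mu by rewrite Wy mu1_entry.
have /x_opt cost_le : lp_feasible Wb mu y.
  by split=> a; [exact: ltW | rewrite Wy_entry].
have yWx : \sum_a y a 0 * (Wb *m x) a 0 = mu * \sum_a x a 0.
  have /matrixP/(_ 0 0) : y^T *m (Wb *m x) = (Wb *m y)^T *m x.
    by rewrite trmx_mul Wb_sym mulmxA.
  rewrite [LHS]mxE [RHS]mxE big_distrr /=.
  under eq_bigr do rewrite mxE; move=> ->.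
  by apply: eq_bigr => a _; rewrite mxE Wy_entry.
have slack_ge0 a : 0 <= y a 0 * ((Wb *m x) a 0 - mu).
  by rewrite mulr_ge0 ?subr_ge0 // ltW.
have slack_sum0 : \sum_a y a 0 * ((Wb *m x) a 0 - mu) = 0.
  apply/eqP; rewrite eq_le sumr_ge0 ?andbT //.
  under eq_bigr do rewrite mulrBr.
  by rewrite sumrB yWx -big_distrl /= subr_le0 [_ * mu]mulrC ler_wpM2l.
apply/matrixP => a j; rewrite (ord1 j) mu1_entry.
have := psumr_eq0P (fun a _ => slack_ge0 a) slack_sum0; move/(_ a isT)/eqP.
by rewrite mulf_eq0 subr_eq0 gt_eqF //= => /eqP.
Qed.

Section StableEquilibria.
Variables (R : realFieldType) (k : nat).
Implicit Types (W : 'M[R]_k) (th : 'cV[R]_k).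

Lemma util_mulmx W th i : util W th i = (W^T *m th) i 0.
Proof. by rewrite mxE; apply: eq_bigr => j _; rewrite mxE. Qed.

Lemma util_replace_self W th i t :
  util W (replace th i t) i = util W th i + (t - th i 0) * W i i.
Proof.
rewrite /util (bigD1 i) // [in RHS](bigD1 i) //= /replace mxE eqxx.
have -> : \sum_(j | j != i) W j i * (\col_j (if j == i then t else th j 0)) j 0
    = \sum_(j | j != i) W j i * th j 0.
  by apply: eq_bigr => j /negbTE ji; rewrite mxE ji.
lra.
Qed.

Lemma stable_eq_tight W mu th i :
  stable_eq W mu th -> 0 < W i i -> th i 0 != 0 -> util W th i = mu.
Proof.
move=> [th_ge0 [th_feas th_stable]] Wii_gt0 thi_neq0.
apply/eqP; rewrite eq_le th_feas andbT leNgt; apply/negP => slack.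
have thi_gt0 : 0 < th i 0 by rewrite lt_def thi_neq0 th_ge0.
pose d := Num.min (th i 0) ((util W th i - mu) / W i i).
have d_gt0 : 0 < d by rewrite lt_min thi_gt0 divr_gt0 ?subr_gt0.
have d_le : d * W i i <= util W th i - mu.
  by rewrite -ler_pdivlMr // ge_min lexx orbT.
apply: (th_stable i (th i 0 - d)).
- by rewrite subr_ge0 ge_min lexx.
- by rewrite ltrBlDr ltrDl.
- rewrite util_replace_self; lra.
Qed.

Definition restrict_cV th (S : {set 'I_k}) : 'cV[R]_#|S| :=
  \col_a th (enum_val a) 0.

Lemma restrict_tr W (S : {set 'I_k}) : (restrict W S)^T = restrict W^T S.
Proof. by apply/matrixP => a b; rewrite !mxE. Qed.

Lemma restrict_mulmx_support W (S : {set 'I_k}) th :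
    (forall i, i \notin S -> th i 0 = 0) ->
  restrict W S *m restrict_cV th S = restrict_cV (W *m th) S.
Proof.
move=> th_supp; apply/matrixP => a j; rewrite (ord1 j) !mxE.
rewrite (bigID (mem S)) /= [X in _ = _ + X]big1 ?addr0; last first.
  by move=> i /th_supp ->; rewrite mulr0.
by rewrite [RHS]big_enum_val; apply: eq_bigr => b _; rewrite !mxE.
Qed.

End StableEquilibria.

Theorem lemma3 (R : realFieldType) (k : nat) (W : 'M[R]_k) (mu : R)
  (W_sym : W^T = W)
  (W_psd : forall x : 'cV[R]_k, 0 <= (x^T *m W *m x) 0 0)
  (W_01 : forall i j, 0 <= W i j <= 1)
  (W_diag : forall i, W i i = 1)
  (mu_pos : 0 < mu)
  (theq : 'cV[R]_k) (Hopt : opt_stable_eq W mu theq)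
  (thbar : 'cV[R]_#|[set i | theq i 0 != 0]|)
  (Hbar : lp_optimal (restrict W [set i | theq i 0 != 0]) mu thbar) :
  restrict W [set i | theq i 0 != 0] *m thbar = mu *: const_mx 1.
Proof.
have [th_stable _] := Hopt.
set S := [set i | theq i 0 != 0] in thbar Hbar *.
have inS i : (i \in S) = (theq i 0 != 0) by rewrite inE.
apply: (lp_optimal_tight (y := restrict_cV theq S)) => //.
- exact: ltW.
- by rewrite restrict_tr W_sym.
- move=> a; have := enum_valP a; rewrite inS mxE lt_def => ->.
  exact: th_stable.1.
- rewrite restrict_mulmx_support; last by move=> i; rewrite inS negbK => /eqP.
  apply/matrixP => a j; rewrite (ord1 j) mxE -[W]W_sym -util_mulmx.
  rewrite (stable_eq_tight th_stable) ?W_diag ?ltr01 -?inS ?enum_valP //.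
  by rewrite !mxE mulr1.
Qed.
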